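(* There exists an abelian sp-group $G$ whose $p$-components $T_p$ are all finite and such that $G/T$ has torsion-free rank $1$ (hence $G/T$ is strongly co-Hopfian), but neither the torsion subgroup $T$ nor $G$ is strongly co-Hopfian.
   Context: All groups are abelian. $T$ is the torsion subgroup of $G$ and $T_p$ its $p$-primary component. A mixed group $G$ with infinitely many non-zero $T_p$ is an sp-group if it is a pure subgroup of $\prod_p T_p$ containing $\bigoplus_p T_p$. A group is strongly co-Hopfian if for every endomorphism $f$ there is $n\in\mathbb N$ with $f^n(G)=f^{n+1}(G)$. *)

(* abelian groups are zmodTypes (additive notation). *)
From mathcomp Require Import all_boot all_order all_algebra.
Set Implicit Arguments. Unset Strict Implicit. Unset Printing Implicit Defensive.
Import GRing.Theory.
Local Open Scope ring_scope.

Section Defs.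
Variable G : zmodType.

Definition torsion (x : G) : Prop := exists n : nat, (0 < n)%N /\ x *+ n = 0.

Definition pcomp (p : nat) (x : G) : Prop := exists k : nat, x *+ (p ^ k) = 0.

Definition mixed : Prop :=
  (exists x, torsion x /\ x <> 0) /\ (exists x, ~ torsion x).

Definition inf_many_nonzero_Tp : Prop :=
  forall N : nat, exists p : nat, [/\ prime p, (N < p)%N & exists x, x <> 0 /\ pcomp p x].

Definition all_Tp_finite : Prop :=
  forall p : nat, prime p -> exists s : seq G, forall x, pcomp p x -> x \in s.

(* elements of prod_p T_p, represented as functions nat -> G, supported on
   primes, whose p-th coordinate lies in T_p; operations are pointwise *)
Definition in_prodT (y : nat -> G) : Prop :=
  forall p : nat, (prime p -> pcomp p (y p)) /\ (~~ prime p -> y p = 0).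

(* finitely supported elements: the direct sum (+)_p T_p *)
Definition in_sumT (y : nat -> G) : Prop :=
  in_prodT y /\ exists N : nat, forall p, (N <= p)%N -> y p = 0.

(* G is an sp-group: mixed, infinitely many nonzero T_p, and (up to the
   embedding phi) a pure subgroup of prod_p T_p containing (+)_p T_p *)
Definition sp_group : Prop :=
  mixed /\ inf_many_nonzero_Tp /\
  exists phi : G -> nat -> G,
    [/\ forall x y, phi (x + y) = (fun p => phi x p + phi y p),
        injective phi,
        forall x, in_prodT (phi x),
        (* purity of phi(G) in prod_p T_p *)
        (forall (x : G) (n : nat) (y : nat -> G), (0 < n)%N -> in_prodT y ->
            (forall p, y p *+ n = phi x p) ->
            exists z : G, forall p, phi z p *+ n = phi x p) &
        (forall y, in_sumT y -> exists x, phi x = y)].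

(* G/T has torsion-free rank 1 (G/T is torsion-free, so its rank is the
   maximal number of Z-independent elements of G modulo T) *)
Definition GmodT_rank1 : Prop :=
  (exists x : G, ~ torsion x) /\
  forall x y : G, exists m n : int, (m != 0 \/ n != 0) /\ torsion (x *~ m + y *~ n).

(* The subgroup S of G is strongly co-Hopfian: every endomorphism f of S
   (given as a map G -> G that is additive on S and maps S into S) satisfies
   f^n(S) = f^(n+1)(S) for some n. *)
Definition strongly_coHopfian_sub (S : G -> Prop) : Prop :=
  forall f : G -> G,
    (forall x, S x -> S (f x)) ->
    (forall x y, S x -> S y -> f (x + y) = f x + f y) ->
    exists n : nat, forall y : G,
      (exists x, S x /\ y = iter n f x) <-> (exists x, S x /\ y = iter n.+1 f x).

Definition strongly_coHopfian : Prop := strongly_coHopfian_sub (fun _ => True).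

End Defs.

From Pilot Require Import Defs.
From HB Require Import structures.
From mathcomp Require Import all_boot all_order all_algebra.
From mathcomp Require Import boolp ring zify.
Set Implicit Arguments. Unset Strict Implicit. Unset Printing Implicit Defensive.
Import GRing.Theory.
Local Open Scope ring_scope.

(* Take T_p = Z/p^p and v = (p^(p-1))_p in prod_p T_p, and let G be the purification
   of (+)_p T_p + Zv in prod_p T_p.  Modulo T every element of G is a rational
   multiple of v, so G/T has rank 1.  The endomorphism f multiplying the p-th
   coordinate by p maps G into itself, because p v_p = p^p = 0.  For p > n, the
   element f^n(e_p) = p^n e_p of f^n(T) is not in f^(n+1)(G), whose p-th
   coordinates are all divisible by p^(n+1) in Z/p^p; so neither on T nor on G
   does the chain of images stabilise. *)

Lemma pcomp_torsion (G : zmodType) p (x : G) : (0 < p)%N -> Defs.pcomp p x -> torsion x.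
Proof. by move=> p_gt0 [k pkx]; exists (p ^ k)%N; rewrite expn_gt0 p_gt0. Qed.

Lemma not_strongly_coHopfian_sub (G : zmodType) (S : G -> Prop) (f : G -> G) :
  (forall x, S x -> S (f x)) ->
  (forall x y, S x -> S y -> f (x + y) = f x + f y) ->
  (forall n, exists2 t, S t & forall x, iter n f t <> iter n.+1 f x) ->
  ~ strongly_coHopfian_sub S.
Proof.
move=> fS fD chain /(_ f fS fD) [n stab].
have [t St nt] := chain n.
have [|x [_ e]] := (stab (iter n f t)).1; first by exists t.
exact: nt x e.
Qed.

Definition cyc (p : nat) : nat := if prime p then (p ^ p)%N else 1%N.
Local Notation cycz p := (Posz (cyc p)).

Definition vcoord (p : nat) : int := if prime p then (p ^ p.-1)%N%:Z else 0.

Lemma cyc_gt0 p : (0 < cyc p)%N.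
Proof. by rewrite /cyc; case: ifP => // pp; rewrite expn_gt0 prime_gt0. Qed.

Lemma cycz_gt0 p : 0 < cycz p.
Proof. by rewrite ltz_nat cyc_gt0. Qed.

Lemma cycz_neq0 p : cycz p != 0.
Proof. by rewrite eqz_nat -lt0n cyc_gt0. Qed.

Lemma mod1_cycz p : prime p -> (1 %% cycz p)%Z = 1.
Proof.
move=> pp; rewrite /cyc pp modz_small //= ltz_nat.
exact: ltn_trans (prime_gt1 pp) (ltn_expl p (prime_gt1 pp)).
Qed.

Lemma cycz_dvd_pvcoord p : (cycz p %| p%:Z * vcoord p)%Z.
Proof.
rewrite /cyc /vcoord; case: ifP => pp; last by rewrite dvdzE /= dvd1n.
by rewrite -PoszM dvdzE /= -expnS prednK ?prime_gt0.
Qed.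

(* Elements of prod_p T_p are coded by integer sequences with the p-th entry
   reduced mod p^p; non-prime coordinates have modulus 1, hence are 0. *)
Definition reduced (f : nat -> int) : Prop := forall p, f p = (f p %% cycz p)%Z.

Definition rat_multiple_v (f : nat -> int) : Prop :=
  exists n : nat, exists m : int, exists N : nat, (0 < n)%N /\
    forall p, (N <= p)%N -> (cycz p %| n%:Z * f p - m * vcoord p)%Z.

Definition sp_elem (f : nat -> int) : Prop := reduced f /\ rat_multiple_v f.

Record spG := SpG { coord : nat -> int; coordP : sp_elem coord }.

Lemma spG_ext (x y : spG) : coord x =1 coord y -> x = y.
Proof.
case: x y => [f fP] [g gP] /= /funext fg; subst g.
by rewrite (Prop_irrelevance fP gP).
Qed.

HB.instance Definition _ := gen_eqMixin spG.
HB.instance Definition _ := gen_choiceMixin spG.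

Lemma sp_elem0 : sp_elem (fun _ => 0).
Proof.
split=> [p|]; first by rewrite mod0z.
by exists 1%N, 0, 0%N; split=> // p _; rewrite mulr0 mul0r subr0 dvdz0.
Qed.

Lemma sp_elem_opp (x : spG) : sp_elem (fun p => (- coord x p) %% cycz p)%Z.
Proof.
have [_ [n [m [N [n_gt0 xv]]]]] := coordP x.
split=> [p|]; first by rewrite modz_mod.
exists n, (- m), N; split=> // p /xv.
rewrite -!eqz_mod_dvd modzMmr mulrN mulNr.
by rewrite !eqz_mod_dvd -opprD rpredN.
Qed.

Lemma sp_elem_add (x y : spG) :
  sp_elem (fun p => (coord x p + coord y p) %% cycz p)%Z.
Proof.
have [_ [n [m [N [n_gt0 xv]]]]] := coordP x.
have [_ [n' [m' [N' [n'_gt0 yv]]]]] := coordP y.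
split=> [p|]; first by rewrite modz_mod.
exists (n * n')%N, (n'%:Z * m + n%:Z * m'), (maxn N N').
split=> [|p]; first by rewrite muln_gt0 n_gt0.
rewrite geq_max => /andP[/xv xvp /yv yvp].
rewrite -eqz_mod_dvd modzMmr eqz_mod_dvd.
have -> : (n * n')%N%:Z * (coord x p + coord y p) - (n'%:Z * m + n%:Z * m') * vcoord p
    = n'%:Z * (n%:Z * coord x p - m * vcoord p)
      + n%:Z * (n'%:Z * coord y p - m' * vcoord p) by rewrite PoszM; ring.
by rewrite rpredD // dvdz_mull.
Qed.

Definition zero_sp := SpG sp_elem0.
Definition opp_sp x := SpG (sp_elem_opp x).
Definition add_sp x y := SpG (sp_elem_add x y).

Lemma coord_mod (x : spG) p : coord x p = (coord x p %% cycz p)%Z.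
Proof. exact: (coordP x).1. Qed.

Lemma add_spA : associative add_sp.
Proof. by move=> x y z; apply: spG_ext => p /=; rewrite modzDml modzDmr addrA. Qed.

Lemma add_spC : commutative add_sp.
Proof. by move=> x y; apply: spG_ext => p /=; rewrite addrC. Qed.

Lemma add0sp : left_id zero_sp add_sp.
Proof. by move=> x; apply: spG_ext => p /=; rewrite add0r -coord_mod. Qed.

Lemma addNsp : left_inverse zero_sp opp_sp add_sp.
Proof. by move=> x; apply: spG_ext => p /=; rewrite modzDml addNr mod0z. Qed.

HB.instance Definition _ := GRing.isZmodule.Build spG add_spA add_spC add0sp addNsp.

Lemma coord0 p : coord (0 : spG) p = 0.
Proof. by []. Qed.

Lemma coordD (x y : spG) p : coord (x + y) p = ((coord x p + coord y p) %% cycz p)%Z.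
Proof. by []. Qed.

Lemma coordN (x : spG) p : coord (- x) p = ((- coord x p) %% cycz p)%Z.
Proof. by []. Qed.

Lemma coord_ge0 (x : spG) p : 0 <= coord x p.
Proof. by rewrite coord_mod modz_ge0 ?cycz_neq0. Qed.

Lemma coord_lt (x : spG) p : coord x p < cycz p.
Proof. by rewrite coord_mod ltz_pmod ?cycz_gt0. Qed.

Lemma coordMn (x : spG) n p : coord (x *+ n) p = ((n%:Z * coord x p) %% cycz p)%Z.
Proof.
elim: n => [|n IH]; first by rewrite mulr0n mul0r mod0z.
by rewrite mulrS coordD IH modzDmr -addn1 PoszD mulrDl mul1r addrC.
Qed.

Lemma coordMz (x : spG) (z : int) p : coord (x *~ z) p = ((z * coord x p) %% cycz p)%Z.
Proof.
case: z => n; first by rewrite -pmulrn coordMn.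
by rewrite NegzE mulrNz coordN -pmulrn coordMn modzNm mulNr.
Qed.

Lemma torsion_coord_eventually (w : spG) c N : (0 < c)%N ->
  (forall p, (N <= p)%N -> (cycz p %| c%:Z * coord w p)%Z) -> torsion w.
Proof.
move=> c_gt0 wN; exists (c * \prod_(q < N) cyc q)%N.
split; first by rewrite muln_gt0 c_gt0 prodn_gt0 // => q; exact: cyc_gt0.
apply: spG_ext => p; rewrite coordMn coord0 PoszM; apply/dvdz_mod0P.
have [/wN wNp | p_lt_N] := leqP N p; first by rewrite mulrAC dvdz_mulr.
apply/dvdz_mulr/dvdz_mull; rewrite dvdzE /= (bigD1 (Ordinal p_lt_N)) //=.
exact: dvdn_mulr.
Qed.

Lemma sp_elem_delta p (i : int) :
  sp_elem (fun q => if q == p then (i %% cycz p)%Z else 0).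
Proof.
split=> [q|]; first by case: eqP => [->|_]; rewrite ?modz_mod ?mod0z.
exists 1%N, 0, p.+1; split=> // q q_gt_p.
by rewrite gtn_eqF // mulr0 mul0r subr0 dvdz0.
Qed.

Definition delta p i := SpG (sp_elem_delta p i).

Lemma coord_delta p i q : coord (delta p i) q = if q == p then (i %% cycz p)%Z else 0.
Proof. by []. Qed.

Lemma delta_pcomp p i : prime p -> Defs.pcomp p (delta p i).
Proof.
move=> pp; exists p; apply: spG_ext => q; rewrite coordMn coord_delta coord0.
case: eqP => [->|_]; last by rewrite mulr0 mod0z.
by rewrite /cyc pp modzMmr mulrC modzMl.
Qed.

Lemma delta_nonprime p i : ~~ prime p -> delta p i = 0.
Proof.
move=> pp; apply: spG_ext => q; rewrite coord_delta coord0.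
by case: eqP => // _; rewrite /cyc (negbTE pp) modz1.
Qed.

Lemma delta1_neq0 p : prime p -> delta p 1 != 0.
Proof.
move=> pp; apply/eqP => /(congr1 (coord^~ p)).
by rewrite coord_delta eqxx coord0 mod1_cycz.
Qed.

Lemma modn_coprime_mul_eq0 d c a : coprime c d -> (a < d)%N -> (c * a %% d = 0)%N -> a = 0%N.
Proof.
move=> cd a_lt_d /eqP; rewrite -/(dvdn d (c * a)) Gauss_dvdr 1?coprime_sym //.
by case: a a_lt_d => // a a_lt_d /(dvdn_leq (ltn0Sn a)); rewrite leqNgt a_lt_d.
Qed.

Lemma pcomp_coord_eq0 p (x : spG) q : prime p -> Defs.pcomp p x -> q != p -> coord x q = 0.
Proof.
move=> pp [k pkx] qp; move: (congr1 (coord^~ q) pkx).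
rewrite coordMn coord0; have := coord_ge0 x q; have := coord_lt x q.
rewrite /cyc; case: ifP => [qpr|_]; last by lia.
case: (coord x q) => // a; rewrite ltz_nat => a_lt _.
rewrite -PoszM modz_nat => -[] /(modn_coprime_mul_eq0 _ a_lt) -> //.
by apply: coprimeXl; apply: coprimeXr; rewrite prime_coprime // dvdn_prime2 // eq_sym.
Qed.

Lemma pcomp_delta p (x : spG) : prime p -> Defs.pcomp p x -> x = delta p (coord x p).
Proof.
move=> pp px; apply: spG_ext => q; rewrite coord_delta.
by case: eqP => [->|/eqP qp]; [rewrite -coord_mod | exact: pcomp_coord_eq0 px qp].
Qed.

Lemma sp_elem_vcoord : sp_elem vcoord.
Proof.
split=> [p|]; last by exists 1%N, 1, 0%N; split=> // p _; rewrite subrr dvdz0.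
rewrite /vcoord /cyc; case: ifP => pp; last by rewrite mod0z.
by rewrite modz_nat modn_small // ltn_exp2l ?prime_gt1 // prednK ?prime_gt0.
Qed.

Definition v := SpG sp_elem_vcoord.

Lemma v_not_torsion : ~ torsion v.
Proof.
move=> [n [n_gt0 /(congr1 (coord^~ _))]]; have [p n_lt_p pp] := prime_above n.
move/(_ p); rewrite coordMn coord0 /= /vcoord /cyc pp -PoszM modz_nat => /eqP.
have -> : (p ^ p = p * p ^ p.-1)%N by rewrite -expnS prednK ?prime_gt0.
rewrite eqz_nat -muln_modl modn_small // muln_eq0 expn_eq0.
by rewrite !eqn0Ngt n_gt0 prime_gt0.
Qed.

Lemma spG_mixed : mixed spG.
Proof.
split; last by exists v; exact: v_not_torsion.
exists (delta 2 1); split; last exact/eqP/delta1_neq0.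
exact: pcomp_torsion (delta_pcomp _ _).
Qed.

Lemma spG_inf_Tp : inf_many_nonzero_Tp spG.
Proof.
move=> N; have [p N_lt_p pp] := prime_above N; exists p; split=> //.
by exists (delta p 1); split; [exact/eqP/delta1_neq0 | exact: delta_pcomp].
Qed.

Lemma rat_multiple_v_of (x : spG) (g : nat -> int) n (c : int) N : (0 < n)%N ->
  (forall p, (N <= p)%N -> (cycz p %| n%:Z * g p - c * coord x p)%Z) ->
  rat_multiple_v g.
Proof.
have [_ [n' [m [N' [n'_gt0 xv]]]]] := coordP x.
move=> n_gt0 gx; exists (n' * n)%N, (c * m), (maxn N N').
split=> [|p]; first by rewrite muln_gt0 n'_gt0.
rewrite geq_max => /andP[/gx gxp /xv xvp].
have -> : (n' * n)%N%:Z * g p - c * m * vcoord p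
    = n'%:Z * (n%:Z * g p - c * coord x p)
      + c * (n'%:Z * coord x p - m * vcoord p) by rewrite PoszM; ring.
by rewrite rpredD // dvdz_mull.
Qed.

Definition embed (x : spG) : nat -> spG := fun p => delta p (coord x p).

Lemma embedD x y : embed (x + y) = (fun p => embed x p + embed y p).
Proof.
apply: funext => p; apply: spG_ext => q; rewrite coordD !coord_delta.
case: eqP => [->|_]; last by rewrite addr0 mod0z.
by rewrite coordD modz_mod -!coord_mod.
Qed.

Lemma embed_inj : injective embed.
Proof.
move=> x y xy; apply: spG_ext => p.
by move: (congr1 (fun f => coord (f p) p) xy); rewrite /= eqxx -!coord_mod.
Qed.

Lemma embed_in_prodT x : in_prodT (embed x).
Proof. by move=> p; split; [exact: delta_pcomp | exact: delta_nonprime]. Qed.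

Lemma embed_pure (x : spG) n (y : nat -> spG) : (0 < n)%N ->
  (forall p, y p *+ n = embed x p) -> exists z, forall p, embed z p *+ n = embed x p.
Proof.
move=> n_gt0 yx.
have yxp p : (n%:Z * coord (y p) p = coord x p %[mod cycz p])%Z.
  by move: (congr1 (coord^~ p) (yx p)); rewrite coordMn coord_delta eqxx.
have yz : sp_elem (fun p => coord (y p) p).
  split=> [p|]; first exact: coord_mod.
  apply: (@rat_multiple_v_of x _ n 1 0) => // p _.
  by rewrite mul1r -eqz_mod_dvd (yxp p).
exists (SpG yz) => p; apply: spG_ext => q.
rewrite coordMn !coord_delta; case: eqP => [->|_]; last by rewrite mulr0 mod0z.
by rewrite /= modzMmr yxp.
Qed.

Lemma embed_onto_sumT (y : nat -> spG) : in_sumT y -> exists x, embed x = y.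
Proof.
move=> [yT [N yN]].
have yz : sp_elem (fun p => coord (y p) p).
  split=> [p|]; first exact: coord_mod.
  apply: (@rat_multiple_v_of 0 _ 1 0 N) => // p /yN ->.
  by rewrite coord0 !mulr0 subr0 dvdz0.
exists (SpG yz); apply: funext => p; have [pp|pp] := boolP (prime p).
  rewrite (pcomp_delta pp ((yT p).1 pp)); apply: spG_ext => q.
  by rewrite /embed !coord_delta; case: eqP.
by rewrite (yT p).2 // /embed delta_nonprime.
Qed.

Lemma spG_sp_group : sp_group spG.
Proof.
split; [exact: spG_mixed | split; first exact: spG_inf_Tp].
exists embed; split.
- exact: embedD.
- exact: embed_inj.
- exact: embed_in_prodT.
- by move=> x n y n_gt0 _; exact: embed_pure.
- exact: embed_onto_sumT.
Qed.

Lemma spG_Tp_finite : all_Tp_finite spG.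
Proof.
move=> p pp; exists [seq delta p i%:Z | i <- iota 0 (cyc p)] => x px.
rewrite (pcomp_delta pp px); have := coord_ge0 x p; have := coord_lt x p.
case: (coord x p) => // i; rewrite ltz_nat => i_lt _.
by apply/mapP; exists i; rewrite ?mem_iota.
Qed.

Lemma spG_rank1 : GmodT_rank1 spG.
Proof.
split=> [|x y]; first by exists v; exact: v_not_torsion.
have [_ [n1 [m1 [N1 [n1_gt0 xv]]]]] := coordP x.
have [_ [n2 [m2 [N2 [n2_gt0 yv]]]]] := coordP y.
have [m2_0|m2_neq0] := eqVneq m2 0.
  exists 0, 1; split; first by right.
  rewrite mulr0z add0r mulr1z; apply: (torsion_coord_eventually n2_gt0) => p /yv.
  by rewrite m2_0 mul0r subr0.
exists (n1%:Z * m2), (- (n2%:Z * m1)); split.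
  by left; rewrite mulf_neq0 // eqz_nat -lt0n.
apply: (@torsion_coord_eventually _ 1 (maxn N1 N2)) => // p.
rewrite geq_max => /andP[/xv xvp /yv yvp].
rewrite mul1r coordD !coordMz; apply/dvdz_mod0P.
rewrite modz_mod modzDml modzDmr; apply/dvdz_mod0P.
have -> : n1%:Z * m2 * coord x p + - (n2%:Z * m1) * coord y p
    = m2 * (n1%:Z * coord x p - m1 * vcoord p)
      - m1 * (n2%:Z * coord y p - m2 * vcoord p) by ring.
by rewrite rpredB // dvdz_mull.
Qed.

Lemma sp_elem_pmul (x : spG) : sp_elem (fun p => (p%:Z * coord x p) %% cycz p)%Z.
Proof.
have [_ [n [m [N [n_gt0 xv]]]]] := coordP x.
split=> [p|]; first by rewrite modz_mod.
exists n, 0, N; split=> // p /xv xvp.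
rewrite mul0r subr0; apply/dvdz_mod0P; rewrite modzMmr; apply/dvdz_mod0P.
have -> : n%:Z * (p%:Z * coord x p)
    = p%:Z * (n%:Z * coord x p - m * vcoord p) + m * (p%:Z * vcoord p) by ring.
by rewrite rpredD // dvdz_mull // cycz_dvd_pvcoord.
Qed.

Definition pmul x := SpG (sp_elem_pmul x).

Lemma coord_iter_pmul j x p :
  coord (iter j pmul x) p = (((p ^ j)%N%:Z * coord x p) %% cycz p)%Z.
Proof.
elim: j => [|j IH]; first by rewrite mul1r -coord_mod.
by rewrite /= IH modzMmr mulrA -PoszM -expnS.
Qed.

Lemma pmulD x y : pmul (x + y) = pmul x + pmul y.
Proof. by apply: spG_ext => p; rewrite coordD /= modzMmr modzDml modzDmr mulrDr. Qed.

Lemma pmul_torsion x : torsion x -> torsion (pmul x).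
Proof.
move=> [n [n_gt0 nx]]; exists n; split=> //; apply: spG_ext => p.
move: (congr1 (coord^~ p) nx); rewrite !coordMn coord0 /= modzMmr mulrCA => nxp.
by rewrite -modzMmr nxp mulr0 mod0z.
Qed.

Lemma not_dvdz_pexp_sub p n (a : int) : (1 < p)%N -> (n < p)%N ->
  ~ ((p ^ p)%N%:Z %| (p ^ n)%N%:Z - (p ^ n.+1)%N%:Z * a)%Z.
Proof.
move=> p_gt1 n_lt_p /(dvdz_trans _) dvd_sub.
have {}dvd_sub : ((p ^ n.+1)%N%:Z %| (p ^ n)%N%:Z - (p ^ n.+1)%N%:Z * a)%Z.
  by apply: dvd_sub; rewrite dvdzE /= dvdn_exp2l.
have : ((p ^ n.+1)%N%:Z %| (p ^ n)%N%:Z)%Z.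
  have -> : (p ^ n)%N%:Z
      = (p ^ n)%N%:Z - (p ^ n.+1)%N%:Z * a + (p ^ n.+1)%N%:Z * a by ring.
  by rewrite rpredD ?dvdz_mulr.
by rewrite dvdzE /= dvdn_Pexp2l // ltnn.
Qed.

Lemma pmul_images_decrease n :
  exists2 t : spG, torsion t & forall x, iter n pmul t <> iter n.+1 pmul x.
Proof.
have [p n_lt_p pp] := prime_above n.
exists (delta p 1); first exact: pcomp_torsion (prime_gt0 pp) (delta_pcomp _ pp).
move=> x /(congr1 (coord^~ p)) /eqP; rewrite !coord_iter_pmul coord_delta eqxx.
rewrite mod1_cycz // mulr1 eqz_mod_dvd /cyc pp.
exact: not_dvdz_pexp_sub (prime_gt1 pp) n_lt_p.
Qed.

Theorem mainTheorem17 :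
  exists G : zmodType,
    [/\ sp_group G,
        all_Tp_finite G,
        GmodT_rank1 G,
        ~ strongly_coHopfian_sub (@torsion G) &
        ~ strongly_coHopfian G].
Proof.
exists spG; split.
- exact: spG_sp_group.
- exact: spG_Tp_finite.
- exact: spG_rank1.
- apply: (not_strongly_coHopfian_sub pmul_torsion) => [x y _ _|]; first exact: pmulD.
  exact: pmul_images_decrease.
- apply: (@not_strongly_coHopfian_sub _ _ pmul) => // [x y _ _|n].
    exact: pmulD.
  by have [t _ nt] := pmul_images_decrease n; exists t.
Qed.
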